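(* Let $f,g\in\mathcal{H}$ be strongly non-polynomial functions such that $f(t)\gg t^{\delta_1}$ and $g(t)\gg t^{\delta_2}$ for some $\delta_1,\delta_2>0$, and $g(t)\ll f(t)$. Then: (i) $S(f,k)=S(g,k)$ for some $k\in\mathbb{N}$ if and only if $f\sim g$; (ii) if $S(f,k)\cap S(g,\ell)\ne\emptyset$ then $k\ge\ell$; moreover, if the function $|f^{(k)}(t)|^{-1/k}$ belongs to $S(g,\ell)$ and $f\not\sim g$, then $k\ge\ell+1$; (iii) there exist infinitely many pairs of integers $(k,\ell)$ with $S(f,k)\cap S(g,\ell)\ne\emptyset$.
   Context: $\mathcal{H}$ is a fixed Hardy field (subfield of germs at $+\infty$ of real functions, closed under differentiation) containing the logarithmico-exponential functions, closed under composition and compositional inversion. $f$ is strongly non-polynomial if $t^d\prec f(t)\prec t^{d+1}$ for some integer $d\ge0$. $f\prec g$: $f/g\to0$; $f\ll g$: $|f|\le C|g|$ eventually; $f\sim g$: $f/g$ tends to a finite non-zero limit. For such $f$ and $k$ large enough that $f^{(k)}(t)\to0$, define $S(f,k)=\{g\in\mathcal{H}:\ |f^{(k)}(t)|^{-1/k}\preceq g(t)\prec|f^{(k+1)}(t)|^{-1/(k+1)}\}$, where $u\preceq v$ means that $\lim_{t\to\infty}|v(t)/u(t)|$ is non-zero (possibly infinite). *)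

From Stdlib Require Import Reals.
From Coquelicot Require Import Coquelicot.
Open Scope R_scope.

Definition ev (P : R -> Prop) : Prop := exists M : R, forall t, M < t -> P t.

(* Hardy's logarithmico-exponential functions (as functions R -> R, i.e.
   representatives of germs at +oo). *)
Inductive LE : (R -> R) -> Prop :=
| LE_id : LE (fun t => t)
| LE_const (c : R) : LE (fun _ => c)
| LE_plus (f g : R -> R) : LE f -> LE g -> LE (fun t => f t + g t)
| LE_mult (f g : R -> R) : LE f -> LE g -> LE (fun t => f t * g t)
| LE_inv (f : R -> R) : LE f -> ev (fun t => f t <> 0) -> LE (fun t => / f t)
| LE_exp (f : R -> R) : LE f -> LE (fun t => exp (f t))
| LE_ln (f : R -> R) : LE f -> ev (fun t => 0 < f t) -> LE (fun t => ln (f t)).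

(* A Hardy field: a set of germs at +oo (represented by functions, closed under
   eventual equality) forming a subfield of the ring of germs of continuous
   functions and closed under differentiation. *)
Record HardyField (H : (R -> R) -> Prop) : Prop := {
  hf_germ : forall f g, H f -> ev (fun t => f t = g t) -> H g;
  hf_const : forall c, H (fun _ => c);
  hf_plus : forall f g, H f -> H g -> H (fun t => f t + g t);
  hf_mult : forall f g, H f -> H g -> H (fun t => f t * g t);
  hf_inv : forall f, H f -> ~ ev (fun t => f t = 0) ->
             ev (fun t => f t <> 0) /\ H (fun t => / f t);
  hf_diff : forall f, H f -> ev (fun t => ex_derive f t) /\ H (Derive f)
}.

(* The fixed Hardy field of the paper: contains the LE functions and is closed
   under composition and compositional inversion. *)
Record GoodHardyField (H : (R -> R) -> Prop) : Prop := {
  ghf_hardy : HardyField H;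
  ghf_LE : forall f, LE f -> H f;
  ghf_comp : forall f g, H f -> H g -> is_lim g p_infty p_infty ->
               H (fun t => f (g t));
  ghf_inverse : forall f, H f -> is_lim f p_infty p_infty ->
      exists h, H h /\ is_lim h p_infty p_infty /\
                ev (fun t => f (h t) = t) /\ ev (fun t => h (f t) = t)
}.

Definition prec (f g : R -> R) : Prop :=
  is_lim (fun t => f t / g t) p_infty 0.
Definition ll (f g : R -> R) : Prop :=
  exists C : R, ev (fun t => Rabs (f t) <= C * Rabs (g t)).
Definition sim (f g : R -> R) : Prop :=
  exists l : R, l <> 0 /\ is_lim (fun t => f t / g t) p_infty l.
Definition preceq (u v : R -> R) : Prop :=
  exists l : Rbar, l <> Finite 0 /\ is_lim (fun t => Rabs (v t / u t)) p_infty l.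

Definition strongly_nonpoly (f : R -> R) : Prop :=
  exists d : nat, prec (fun t => t ^ d) f /\ prec f (fun t => t ^ (d + 1)).

(* k is admissible for f: f^(k)(t) -> 0, so that S(f,k) is defined *)
Definition admissible (f : R -> R) (k : nat) : Prop :=
  is_lim (Derive_n f k) p_infty 0.

Definition dscale (f : R -> R) (k : nat) : R -> R :=
  fun t => Rpower (Rabs (Derive_n f k t)) (- (1 / INR k)).

Definition Sset (H : (R -> R) -> Prop) (f : R -> R) (k : nat) (g : R -> R) : Prop :=
  H g /\ preceq (dscale f k) g /\ prec g (dscale f (S k)).

From Stdlib Require Import Reals Lra Lia Classical Factorial.
From Coquelicot Require Import Coquelicot.
Open Scope R_scope.

(* Write [lnD f i t = ln |f^(i)(t)|].  Every element of a Hardy field has an eventual sign and a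
   limit, so l'Hôpital's rule can be run in both directions along the derivatives.  Comparing [f]
   with [t ^ δ] and [t ^ A] ([δ], [A] not integers) this way gives
     [(δ - i) ln t - K <= lnD f i <= (A - i) ln t + K]   and   [lnD f (i+1) <= lnD f i - ln t + K].
   Hence the scales [|f^(k)|^(-1/k) = exp (- lnD f k / k)] form a chain, each one negligible
   against the next, with logarithmic slopes between [1 - A/k] and [1 - δ/k].
   From [g << f] one gets [g^(k) << f^(k)], so the [k]-th scale of [f] is dominated by the [k]-th
   scale of [g]; this gives (ii) except for the strict inequality.  If the two [k]-th scales are
   moreover comparable, then [f^(k) << g^(k)], and integrating back [k] times gives [f << g], hence
   [f ~ g]; conversely [f ~ g] makes scales of equal index comparable, so [S(f,k) = S(g,k)].
   This gives (i) and the strict inequality in (ii).  Since all slopes tend to [1], the two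
   chains of scales interlace infinitely often, which gives (iii). *)

(** * Limits at infinity *)

Lemma ev_and (P Q : R -> Prop) : ev P -> ev Q -> ev (fun t => P t /\ Q t).
Proof.
  intros [M1 H1] [M2 H2]. exists (Rmax M1 M2). intros t Ht.
  split; [apply H1 | apply H2]; pose proof (Rmax_l M1 M2); pose proof (Rmax_r M1 M2); lra.
Qed.

Lemma ev_mono (P Q : R -> Prop) : ev P -> (forall t, P t -> Q t) -> ev Q.
Proof. intros [M HM] HPQ. exists M. auto. Qed.

Lemma ev_gt (a : R) : ev (fun t => a < t).
Proof. exists a. auto. Qed.

Lemma ev_ex (P : R -> Prop) : ev P -> exists t, P t.
Proof. intros [M HM]. exists (M + 1). apply HM. lra. Qed.

Lemma is_lim_pinfty_real (u : R -> R) (l : R) :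
  is_lim u p_infty l <-> forall eps, 0 < eps -> ev (fun t => Rabs (u t - l) < eps).
Proof.
  rewrite <- is_lim_spec. split.
  - intros Hl eps He. exact (Hl (mkposreal eps He)).
  - intros Hl eps. exact (Hl eps (cond_pos eps)).
Qed.

Lemma is_lim_pinfty_pinfty (u : R -> R) :
  is_lim u p_infty p_infty <-> forall M, ev (fun t => M < u t).
Proof. rewrite <- is_lim_spec. tauto. Qed.

Lemma is_lim_pinfty_minfty (u : R -> R) :
  is_lim u p_infty m_infty <-> forall M, ev (fun t => u t < M).
Proof. rewrite <- is_lim_spec. tauto. Qed.

Lemma is_lim_pinfty_unique (u : R -> R) (l1 l2 : Rbar) :
  is_lim u p_infty l1 -> is_lim u p_infty l2 -> l1 = l2.
Proof. intros H1 H2. rewrite <- (is_lim_unique _ _ _ H1). apply is_lim_unique; auto. Qed.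

Lemma is_lim_Rabs_0 (u : R -> R) :
  is_lim (fun t => Rabs (u t)) p_infty 0 <-> is_lim u p_infty 0.
Proof.
  rewrite !is_lim_pinfty_real. split; intros Hu eps He; apply (ev_mono _ _ (Hu eps He));
    intros t; rewrite !Rminus_0_r, Rabs_Rabsolu; auto.
Qed.

Lemma is_lim_Rabs_nonneg (u : R -> R) (L : Rbar) :
  is_lim (fun t => Rabs (u t)) p_infty L -> Rbar_le 0 L.
Proof.
  intros HL. apply (is_lim_le_loc (fun _ => 0) (fun t => Rabs (u t)) p_infty); auto.
  - exists 0. intros; apply Rabs_pos.
  - apply is_lim_const.
Qed.

Lemma is_lim_ln_lower (x : R -> R) (a b : R) : 0 < a ->
  ev (fun t => a * ln t + b <= x t) -> is_lim x p_infty p_infty.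
Proof.
  intros Ha Hx. apply is_lim_pinfty_pinfty. intros M.
  assert (Hl : is_lim (fun t => a * ln t + b) p_infty p_infty).
  { eapply is_lim_plus. apply is_lim_scal_l, is_lim_ln_p. apply is_lim_const.
    simpl. unfold Rbar_mult, Rbar_mult'. destruct (Rle_dec 0 a); [|lra].
    destruct (Rle_lt_or_eq_dec 0 a r); [|lra]. constructor. }
  rewrite is_lim_pinfty_pinfty in Hl.
  apply (ev_mono _ _ (ev_and _ _ Hx (Hl M))). intros t [H1 H2]. lra.
Qed.

Lemma is_lim_ln_upper (x : R -> R) (a b : R) : a < 0 ->
  ev (fun t => x t <= a * ln t + b) -> is_lim x p_infty m_infty.
Proof.
  intros Ha Hx. apply is_lim_pinfty_minfty. intros M.
  assert (Hp : is_lim (fun t => - x t) p_infty p_infty).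
  { apply (is_lim_ln_lower _ (-a) (-b)); [lra|]. apply (ev_mono _ _ Hx). intros t Ht. lra. }
  rewrite is_lim_pinfty_pinfty in Hp. apply (ev_mono _ _ (Hp (-M))). intros t Ht. lra.
Qed.

Lemma is_lim_exp_minfty (y : R -> R) :
  is_lim y p_infty m_infty -> is_lim (fun t => exp (y t)) p_infty 0.
Proof.
  intros Hy. apply (is_lim_comp exp y p_infty 0 m_infty); auto.
  apply is_lim_exp_m. exists 0. intros; discriminate.
Qed.

Lemma is_lim_exp_pinfty (y : R -> R) :
  is_lim y p_infty p_infty -> is_lim (fun t => exp (y t)) p_infty p_infty.
Proof.
  intros Hy. apply (is_lim_comp exp y p_infty p_infty p_infty); auto.
  apply is_lim_exp_p. exists 0. intros; discriminate.
Qed.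

Lemma nat_above (a : R) : exists n : nat, a < INR n.
Proof. destruct (INR_archimed 1 a) as [n Hn]; [lra|]. exists n. lra. Qed.

(** * Asymptotic comparison *)

Definition littleo (u v : R -> R) : Prop :=
  forall eps, 0 < eps -> ev (fun t => Rabs (u t) <= eps * Rabs (v t)).

Definition zero_or_infinite (u : R -> R) : Prop :=
  is_lim u p_infty 0 \/ is_lim (fun t => Rabs (u t)) p_infty p_infty.

Definition regular (u : R -> R) : Prop :=
  ev (fun t => u t <> 0) /\ zero_or_infinite u.

Lemma ll_nonneg (u v : R -> R) :
  ll u v -> exists C, 0 <= C /\ ev (fun t => Rabs (u t) <= C * Rabs (v t)).
Proof.
  intros [C HC]. exists (Rabs C). split; [apply Rabs_pos|].
  apply (ev_mono _ _ HC). intros t Ht.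
  pose proof (Rle_abs C). pose proof (Rabs_pos (v t)). nra.
Qed.

Lemma ll_trans (u v w : R -> R) : ll u v -> ll v w -> ll u w.
Proof.
  intros Huv Hvw. destruct (ll_nonneg _ _ Huv) as [C1 [HC1 H1]].
  destruct (ll_nonneg _ _ Hvw) as [C2 [HC2 H2]]. exists (C1 * C2).
  apply (ev_mono _ _ (ev_and _ _ H1 H2)). intros t [Ht1 Ht2]. nra.
Qed.

Lemma ll_littleo_absurd (u v : R -> R) :
  ll u v -> littleo v u -> ev (fun t => u t <> 0) -> False.
Proof.
  intros Huv Hvu Hu. destruct (ll_nonneg _ _ Huv) as [C [HC HCuv]].
  assert (Heps : 0 < / (C + 1)) by (apply Rinv_0_lt_compat; lra).
  destruct (ev_ex _ (ev_and _ _ (ev_and _ _ HCuv (Hvu _ Heps)) Hu)) as [t [[H1 H2] H3]].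
  pose proof (Rabs_pos_lt _ H3).
  assert (Rabs (u t) <= C / (C + 1) * Rabs (u t)).
  { apply (Rle_trans _ _ _ H1).
    replace (C / (C + 1) * Rabs (u t)) with (C * (/ (C + 1) * Rabs (u t))) by (field; lra).
    apply Rmult_le_compat_l; auto. }
  assert (C / (C + 1) < 1) by (apply (Rmult_lt_reg_r (C + 1)); [lra|]; field_simplify; lra).
  nra.
Qed.

Lemma abs_le_of_ratio_le (u v : R -> R) (c t : R) :
  v t <> 0 -> Rabs (u t / v t) <= c -> Rabs (u t) <= c * Rabs (v t).
Proof.
  intros Hv Hc. pose proof (Rabs_pos_lt _ Hv). rewrite Rabs_div in Hc by auto.
  apply (Rmult_le_compat_r (Rabs (v t))) in Hc; [|lra].
  unfold Rdiv in Hc. rewrite Rmult_assoc, Rinv_l, Rmult_1_r in Hc by lra. exact Hc.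
Qed.

Lemma ll_of_ratio_lim (u v : R -> R) (l : R) : ev (fun t => v t <> 0) ->
  is_lim (fun t => Rabs (u t / v t)) p_infty l -> ll u v.
Proof.
  intros Hv Hl. rewrite is_lim_pinfty_real in Hl. exists (l + 1).
  apply (ev_mono _ _ (ev_and _ _ (Hl 1 ltac:(lra)) Hv)). intros t [H1 H2].
  apply abs_le_of_ratio_le; auto. apply Rabs_def2 in H1. lra.
Qed.

Lemma littleo_of_prec (u v : R -> R) : ev (fun t => v t <> 0) -> prec u v -> littleo u v.
Proof.
  intros Hv Hl eps He. unfold prec in Hl. rewrite is_lim_pinfty_real in Hl.
  apply (ev_mono _ _ (ev_and _ _ (Hl eps He) Hv)). intros t [H1 H2].
  apply abs_le_of_ratio_le; auto. rewrite Rminus_0_r in H1. lra.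
Qed.

Lemma littleo_of_ratio_pinfty (u v : R -> R) : ev (fun t => v t <> 0) ->
  is_lim (fun t => Rabs (u t / v t)) p_infty p_infty -> littleo v u.
Proof.
  intros Hv Hl eps He. rewrite is_lim_pinfty_pinfty in Hl.
  apply (ev_mono _ _ (ev_and _ _ (Hl (/ eps)) Hv)). intros t [H1 H2].
  pose proof (Rabs_pos_lt _ H2). rewrite Rabs_div in H1 by auto.
  apply (Rmult_lt_compat_r (eps * Rabs (v t))) in H1; [|nra].
  replace (/ eps * (eps * Rabs (v t))) with (Rabs (v t)) in H1 by (field; lra).
  replace (Rabs (u t) / Rabs (v t) * (eps * Rabs (v t))) with (eps * Rabs (u t)) in H1
    by (field; lra). lra.
Qed.

Lemma ll_of_sim (u v : R -> R) : ev (fun t => v t <> 0) -> sim u v -> ll u v.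
Proof.
  intros Hv [l [_ Hl]]. apply (ll_of_ratio_lim u v (Rabs l) Hv).
  apply (is_lim_Rabs _ _ (Finite l) Hl).
Qed.

Lemma sim_sym (u v : R -> R) : sim u v -> sim v u.
Proof.
  intros [l [Hl0 Hl]]. exists (/ l). split; [apply Rinv_neq_0_compat; auto|].
  apply (is_lim_ext (fun t => / (u t / v t))).
  - intros t. unfold Rdiv. rewrite Rinv_mult, Rinv_inv. apply Rmult_comm.
  - apply (is_lim_inv _ _ (Finite l)); auto. intros He; injection He; auto.
Qed.

Lemma preceq_prec_absurd (u v : R -> R) : preceq u v -> prec v u -> False.
Proof.
  intros [L [HL0 HL]] Hp. apply HL0.
  apply (is_lim_pinfty_unique (fun t => Rabs (v t / u t))); auto.
  apply is_lim_Rabs_0. exact Hp.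
Qed.

Lemma prec_ll_trans (h u v : R -> R) :
  ev (fun t => u t <> 0) -> prec h u -> ll u v -> prec h v.
Proof.
  intros Hu Hp Huv. destruct (ll_nonneg _ _ Huv) as [C [HC HCuv]].
  apply is_lim_Rabs_0.
  apply (is_lim_le_le_loc (fun _ => 0) (fun t => C * Rabs (h t / u t))).
  - apply (ev_mono _ _ (ev_and _ _ Hu HCuv)). intros t [H1 H2]. split; [apply Rabs_pos|].
    pose proof (Rabs_pos_lt _ H1).
    destruct (Req_dec (v t) 0) as [Hv|Hv].
    { rewrite Hv. unfold Rdiv. rewrite Rinv_0, Rmult_0_r, Rabs_R0.
      apply Rmult_le_pos; [lra|apply Rabs_pos]. }
    pose proof (Rabs_pos_lt _ Hv). rewrite !Rabs_div by auto.
    apply (Rmult_le_reg_r (Rabs (v t) * Rabs (u t))); [nra|].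
    replace (Rabs (h t) / Rabs (v t) * (Rabs (v t) * Rabs (u t))) with (Rabs (h t) * Rabs (u t))
      by (field; lra).
    replace (C * (Rabs (h t) / Rabs (u t)) * (Rabs (v t) * Rabs (u t)))
      with (Rabs (h t) * (C * Rabs (v t))) by (field; lra).
    apply Rmult_le_compat_l; [apply Rabs_pos|lra].
  - apply is_lim_const.
  - replace (Finite 0) with (Rbar_mult C 0) by (simpl; rewrite Rmult_0_r; auto).
    apply is_lim_scal_l. apply is_lim_Rabs_0. exact Hp.
Qed.

Lemma preceq_sim (u v h : R -> R) :
  (forall t, u t <> 0) -> (forall t, v t <> 0) -> preceq u h -> sim u v -> preceq v h.
Proof.
  intros Hu Hv [L [HL0 HL]] [l [Hl0 Hl]].
  assert (HLpos : Rbar_le 0 L) by exact (is_lim_Rabs_nonneg _ _ HL).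
  assert (Hal : 0 < Rabs l) by (apply Rabs_pos_lt; auto).
  exists (Rbar_mult L (Rabs l)). split.
  - destruct L as [x| |]; simpl in *; try contradiction.
    + intros He. injection He. intros Hx. apply Rmult_integral in Hx.
      destruct Hx as [->|Hx]; [apply HL0; auto|lra].
    + unfold Rbar_mult'. destruct (Rle_dec 0 (Rabs l)); [|lra].
      destruct (Rle_lt_or_eq_dec 0 (Rabs l) r); [discriminate|lra].
  - apply (is_lim_ext (fun t => Rabs (h t / u t) * Rabs (u t / v t))).
    + intros t. rewrite <- Rabs_mult. f_equal. field. auto.
    + apply is_lim_mult; auto. apply (is_lim_Rabs _ _ (Finite l)); auto.
      destruct L as [x| |]; simpl; auto; lra.
Qed.

(** * Mean value arguments and l'Hôpital's rule *)

Lemma ex_derive_continuity_pt (u : R -> R) (t : R) : ex_derive u t -> continuity_pt u t.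
Proof. intros Hd. apply continuity_pt_filterlim. apply (ex_derive_continuous u t Hd). Qed.

Lemma no_sign_change (u : R -> R) (M a b : R) :
  (forall t, M < t -> u t <> 0 /\ continuity_pt u t) ->
  M < a -> M < b -> u a < 0 -> 0 < u b -> False.
Proof.
  intros Hu Ha Hb Hua Hub.
  destruct (Rtotal_order a b) as [Hab|[->|Hba]]; [|lra|].
  - destruct (Ranalysis5.IVT_interv u a b) as [z [Hz Hz0]]; auto.
    + intros s Hs. apply Hu. lra.
    + apply (Hu z); [lra|auto].
  - destruct (Ranalysis5.IVT_interv (fun x => - u x) b a) as [z [Hz Hz0]]; auto; try lra.
    + intros s Hs. apply continuity_pt_opp. apply Hu. lra.
    + apply (Hu z); lra.
Qed.

Lemma constant_sign (u : R -> R) (M : R) :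
  (forall t, M < t -> u t <> 0 /\ continuity_pt u t) ->
  (forall t, M < t -> 0 < u t) \/ (forall t, M < t -> u t < 0).
Proof.
  intros Hu. assert (Hs : forall t, M < t -> 0 < u t \/ u t < 0).
  { intros t Ht. destruct (Hu t Ht) as [Hz _]. destruct (Rtotal_order (u t) 0) as [|[|]]; tauto. }
  destruct (Hs (M + 1)) as [Hp|Hn]; [lra| left | right]; intros t Ht;
    destruct (Hs t Ht); auto; exfalso.
  - apply (no_sign_change u M t (M + 1)); auto; lra.
  - apply (no_sign_change u M (M + 1) t); auto; lra.
Qed.

Lemma mvt_pinfty (u du : R -> R) (M a b : R) :
  (forall t, M < t -> is_derive u t (du t)) -> M < a -> a <= b ->
  exists c, a <= c <= b /\ u b - u a = du c * (b - a).
Proof.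
  intros Hd Ha Hab.
  destruct (MVT_gen u a b du) as [c [Hc1 Hc2]].
  - intros x Hx. apply Hd. rewrite Rmin_left in Hx; lra.
  - intros x Hx. rewrite Rmin_left, Rmax_right in Hx; try lra.
    apply ex_derive_continuity_pt. exists (du x). apply Hd. lra.
  - exists c. rewrite Rmin_left, Rmax_right in Hc1; lra || tauto.
Qed.

Lemma nondecreasing_of_derive (u du : R -> R) (M : R) :
  (forall t, M < t -> is_derive u t (du t)) -> (forall t, M < t -> 0 <= du t) ->
  forall a b, M < a -> a <= b -> u a <= u b.
Proof.
  intros Hd Hp a b Ha Hab. destruct (mvt_pinfty u du M a b Hd Ha Hab) as [c [Hc Hc2]].
  assert (0 <= du c * (b - a)) by (apply Rmult_le_pos; [apply Hp|]; lra). lra.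
Qed.

Lemma nondecreasing_has_lim (u : R -> R) (M : R) :
  (forall a b, M < a -> a <= b -> u a <= u b) -> exists L, is_lim u p_infty L.
Proof.
  intros Hm.
  destruct (classic (exists B, forall t, M < t -> u t <= B)) as [[B HB]|HnB].
  - set (E := fun y => exists t, M < t /\ y = u t).
    destruct (completeness E) as [l [Hub Hlub]].
    + exists B. intros y [t [Ht ->]]. auto.
    + exists (u (M + 1)), (M + 1). split; auto; lra.
    + exists (Finite l). apply is_lim_pinfty_real. intros eps He.
      destruct (classic (exists t, M < t /\ l - eps < u t)) as [[t0 [Ht0 Hl0]]|Hn].
      * exists t0. intros t Ht. assert (u t0 <= u t) by (apply Hm; lra).
        assert (u t <= l) by (apply Hub; exists t; split; auto; lra).
        rewrite Rabs_left1; lra.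
      * exfalso. assert (l <= l - eps); [|lra]. apply Hlub. intros y [t [Ht ->]].
        destruct (Rle_dec (u t) (l - eps)); auto. exfalso; apply Hn. exists t. split; auto; lra.
  - exists p_infty. apply is_lim_pinfty_pinfty. intros B.
    destruct (classic (exists t, M < t /\ B < u t)) as [[t0 [Ht0 Hl0]]|Hn].
    + exists t0. intros t Ht. assert (u t0 <= u t) by (apply Hm; lra). lra.
    + exfalso. apply HnB. exists B. intros t Ht. destruct (Rle_dec (u t) B); auto.
      exfalso; apply Hn; exists t; split; auto; lra.
Qed.

Lemma cauchy_mvt_bound (u v du dv : R -> R) (M C : R) :
  (forall t, M < t -> is_derive u t (du t) /\ is_derive v t (dv t) /\ dv t <> 0 /\
                      Rabs (du t) <= C * Rabs (dv t)) ->
  forall t s, M < t -> t <= s -> Rabs (u s - u t) <= C * Rabs (v s - v t).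
Proof.
  intros Hd t s Ht Hts.
  destruct (Req_dec s t) as [->|Hne]; [rewrite !Rminus_eq_0, Rabs_R0; lra|].
  set (h := fun x => (v s - v t) * u x - (u s - u t) * v x).
  set (dh := fun x => (v s - v t) * du x - (u s - u t) * dv x).
  assert (Hh : forall x, M < x -> is_derive h x (dh x)).
  { intros x Hx. apply (is_derive_minus (fun x => (v s - v t) * u x) (fun x => (u s - u t) * v x));
      apply is_derive_scal; apply Hd; auto. }
  destruct (mvt_pinfty h dh M t s Hh Ht Hts) as [c [Hc Hc2]].
  destruct (Hd c ltac:(lra)) as [_ [_ [Hdc Hb]]].
  (* [h] is built so that [h s = h t], hence [dh] vanishes at the mean value point. *)
  assert (Hdh : (v s - v t) * du c = (u s - u t) * dv c).
  { apply (Rmult_eq_reg_r (s - t)); [|lra]. unfold h, dh in Hc2. lra. }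
  pose proof (Rabs_pos_lt _ Hdc). pose proof (Rabs_pos (v s - v t)).
  apply (Rmult_le_reg_r (Rabs (dv c))); auto.
  rewrite <- Rabs_mult, <- Hdh, Rabs_mult. nra.
Qed.

Lemma abs_le_of_increments_lim_0 (u v : R -> R) (C t : R) :
  (forall s, t < s -> Rabs (u s - u t) <= C * Rabs (v s - v t)) ->
  is_lim u p_infty 0 -> is_lim v p_infty 0 -> Rabs (u t) <= C * Rabs (v t).
Proof.
  intros Hinc Hu Hv.
  assert (Hle : Rbar_le (Rabs (0 - u t)) (C * Rabs (0 - v t))).
  { apply (is_lim_le_loc (fun s => Rabs (u s - u t)) (fun s => C * Rabs (v s - v t)) p_infty).
    - exists t. exact Hinc.
    - apply (is_lim_Rabs _ _ (Finite (0 - u t))).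
      apply (is_lim_minus _ _ _ 0 (u t)); [exact Hu|apply is_lim_const|reflexivity].
    - apply (is_lim_scal_l _ C p_infty (Finite (Rabs (0 - v t)))).
      apply (is_lim_Rabs _ _ (Finite (0 - v t))).
      apply (is_lim_minus _ _ _ 0 (v t)); [exact Hv|apply is_lim_const|reflexivity]. }
  simpl in Hle. rewrite !Rminus_0_l, !Rabs_Ropp in Hle. exact Hle.
Qed.

Lemma lhopital_bound (u v du dv : R -> R) (C : R) : 0 <= C ->
  ev (fun t => is_derive u t (du t) /\ is_derive v t (dv t) /\ dv t <> 0 /\
               Rabs (du t) <= C * Rabs (dv t)) ->
  zero_or_infinite u -> zero_or_infinite v ->
  forall eps, 0 < eps -> ev (fun t => Rabs (u t) <= (C + eps) * Rabs (v t)).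
Proof.
  intros HC [M HM] Hu Hv eps He.
  pose proof (cauchy_mvt_bound u v du dv M C HM) as Hcb.
  set (t0 := M + 1). set (B := Rabs (u t0) + C * Rabs (v t0)).
  assert (Hgrow : forall s, t0 <= s -> Rabs (u s) <= B + C * Rabs (v s)).
  { intros s Hs. specialize (Hcb t0 s ltac:(unfold t0; lra) Hs).
    pose proof (Rabs_triang_inv (u s) (u t0)). pose proof (Rabs_triang (v s) (- v t0)).
    rewrite Rabs_Ropp in *. unfold Rminus in *.
    assert (C * Rabs (v s + - v t0) <= C * (Rabs (v s) + Rabs (v t0)))
      by (apply Rmult_le_compat_l; auto).
    unfold B. lra. }
  destruct Hv as [Hv|Hv].
  - assert (Hu0 : is_lim u p_infty 0).
    { destruct Hu as [Hu|Hu]; auto. exfalso.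
      rewrite is_lim_pinfty_pinfty in Hu. rewrite is_lim_pinfty_real in Hv.
      destruct (ev_ex _ (ev_and _ _ (ev_and _ _ (Hu (B + C)) (Hv 1 ltac:(lra))) (ev_gt t0)))
        as [s [[H1 H2] H3]].
      specialize (Hgrow s ltac:(lra)). rewrite Rminus_0_r in H2. nra. }
    exists M. intros t Ht.
    pose proof (abs_le_of_increments_lim_0 u v C t (fun s Hs => Hcb t s Ht (Rlt_le _ _ Hs)) Hu0 Hv).
    pose proof (Rabs_pos (v t)). nra.
  - rewrite is_lim_pinfty_pinfty in Hv.
    apply (ev_mono _ _ (ev_and _ _ (Hv (B / eps)) (ev_gt t0))). intros s [H1 H2].
    specialize (Hgrow s ltac:(lra)).
    assert (B < eps * Rabs (v s)).
    { apply (Rmult_lt_reg_r (/ eps)); [apply Rinv_0_lt_compat; auto|].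
      replace (eps * Rabs (v s) * / eps) with (Rabs (v s)) by (field; lra). exact H1. }
    lra.
Qed.

Lemma ll_of_ll_derive (u v du dv : R -> R) :
  ev (fun t => is_derive u t (du t) /\ is_derive v t (dv t) /\ dv t <> 0) ->
  zero_or_infinite u -> zero_or_infinite v -> ll du dv -> ll u v.
Proof.
  intros Hd Hu Hv Hll. destruct (ll_nonneg _ _ Hll) as [C [HC HCd]].
  exists (C + 1). apply (lhopital_bound u v du dv C); auto; [|lra].
  apply (ev_mono _ _ (ev_and _ _ Hd HCd)). tauto.
Qed.

Lemma littleo_of_littleo_derive (u v du dv : R -> R) :
  ev (fun t => is_derive u t (du t) /\ is_derive v t (dv t) /\ dv t <> 0) ->
  zero_or_infinite u -> zero_or_infinite v -> littleo du dv -> littleo u v.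
Proof.
  intros Hd Hu Hv Hsmall eps He.
  replace eps with (eps / 2 + eps / 2) by field.
  apply (lhopital_bound u v du dv (eps / 2)); auto; [lra| |lra].
  apply (ev_mono _ _ (ev_and _ _ Hd (Hsmall (eps / 2) ltac:(lra)))). tauto.
Qed.

Lemma ll_of_ll_derive_chain (j : nat) : forall (U V : nat -> R -> R),
  (forall i, (i < j)%nat ->
     ev (fun t => is_derive (U i) t (U (S i) t) /\ is_derive (V i) t (V (S i) t) /\
                  V (S i) t <> 0)) ->
  (forall i, (i < j)%nat -> zero_or_infinite (U i) /\ zero_or_infinite (V i)) ->
  ll (U j) (V j) -> ll (U 0%nat) (V 0%nat).
Proof.
  induction j as [|j IH]; intros U V Hd Hz Hj; auto.
  assert (H1 : ll (U 1%nat) (V 1%nat)).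
  { apply (IH (fun i => U (S i)) (fun i => V (S i))); auto;
      intros i Hi; [apply Hd|apply Hz]; lia. }
  destruct (Hz 0%nat ltac:(lia)).
  apply (ll_of_ll_derive _ _ (U 1%nat) (V 1%nat)); auto. apply Hd. lia.
Qed.

Lemma eventually_constant_of_derive_0 (w : R -> R) :
  ev (fun t => is_derive w t 0) -> exists c, ev (fun t => w t = c).
Proof.
  intros [M HM]. exists (w (M + 1)). exists (M + 1). intros t Ht.
  destruct (mvt_pinfty w (fun _ => 0) M (M + 1) t HM ltac:(lra) ltac:(lra)) as [c [_ Hc]]. lra.
Qed.

Lemma regular_not_eventually_constant (w : R -> R) (c : R) :
  regular w -> ev (fun t => w t = c) -> False.
Proof.
  intros [Hnz Hw] Hc.
  assert (Hlim : is_lim w p_infty c).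
  { apply (is_lim_ext_loc (fun _ => c)); [apply (ev_mono _ _ Hc); auto|apply is_lim_const]. }
  destruct (ev_ex _ (ev_and _ _ Hnz Hc)) as [t [H1 H2]].
  destruct Hw as [Hw|Hw].
  - apply H1. rewrite H2. injection (is_lim_pinfty_unique _ _ _ Hlim Hw). auto.
  - apply is_lim_Rabs in Hlim. pose proof (is_lim_pinfty_unique _ _ _ Hlim Hw). discriminate.
Qed.

(** * Powers *)

Definition monomial (n : nat) (t : R) : R := t ^ n / INR (fact n).

Lemma is_derive_monomial (n : nat) (t : R) : is_derive (monomial (S n)) t (monomial n t).
Proof.
  unfold monomial.
  replace (t ^ n / INR (fact n)) with (/ INR (fact (S n)) * (INR (S n) * 1 * t ^ Nat.pred (S n))).
  - apply (is_derive_ext (fun t => / INR (fact (S n)) * t ^ S n)).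
    + intros s. apply Rmult_comm.
    + apply is_derive_scal, is_derive_pow, (is_derive_id (K := R_AbsRing)).
  - simpl Nat.pred. rewrite fact_simpl, mult_INR. field.
    split; [apply INR_fact_neq_0|]. apply not_0_INR. lia.
Qed.

Lemma monomial_pos (n : nat) (t : R) : 0 < t -> 0 < monomial n t.
Proof. intros Ht. apply Rdiv_lt_0_compat; [apply pow_lt; auto|apply INR_fact_lt_0]. Qed.

Lemma ll_pow_le (i j : nat) : (i <= j)%nat -> ll (fun t => t ^ i) (fun t => t ^ j).
Proof.
  intros Hij. exists 1. exists 1. intros t Ht.
  rewrite !Rabs_pos_eq by (apply pow_le; lra). rewrite Rmult_1_l. apply Rle_pow; [lra|auto].
Qed.

Lemma ll_monomial_pow (n : nat) : ll (monomial n) (fun t => t ^ n).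
Proof.
  exists 1. exists 0. intros t Ht. unfold monomial.
  pose proof (INR_fact_lt_0 n). pose proof (pow_lt t n Ht).
  assert (1 <= INR (fact n)) by (apply (le_INR 1), lt_O_fact).
  rewrite !Rabs_pos_eq by (try apply Rlt_le, Rdiv_lt_0_compat; lra).
  apply (Rmult_le_reg_r (INR (fact n))); [lra|]. field_simplify; nra.
Qed.

Lemma ll_pow_monomial (n : nat) : ll (fun t => t ^ n) (monomial n).
Proof.
  exists (INR (fact n)). exists 0. intros t Ht. unfold monomial.
  pose proof (INR_fact_lt_0 n). pose proof (pow_lt t n Ht).
  rewrite !Rabs_pos_eq by (try apply Rlt_le, Rdiv_lt_0_compat; lra).
  right. field. lra.
Qed.

Lemma zero_or_infinite_monomial (n : nat) : zero_or_infinite (monomial (S n)).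
Proof.
  right. apply is_lim_pinfty_pinfty. intros M.
  exists (Rmax 1 (M * INR (fact (S n)))). intros t Ht.
  pose proof (Rmax_l 1 (M * INR (fact (S n)))). pose proof (Rmax_r 1 (M * INR (fact (S n)))).
  pose proof (INR_fact_lt_0 (S n)).
  assert (t <= t ^ S n) by (simpl; assert (1 <= t ^ n) by (apply pow_R1_Rle; lra); nra).
  rewrite Rabs_pos_eq by (apply Rlt_le, monomial_pos; lra). unfold monomial.
  apply (Rmult_lt_reg_r (INR (fact (S n)))); auto. field_simplify; lra.
Qed.

Lemma strongly_nonpoly_not_ll_pow (u : R -> R) (j : nat) :
  strongly_nonpoly u -> ev (fun t => u t <> 0) ->
  ll u (fun t => t ^ j) -> ll (fun t => t ^ j) u -> False.
Proof.
  intros [d [Hlow Hup]] Hnz Huj Hju.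
  destruct (Compare_dec.le_lt_dec j d) as [Hjd|Hdj].
  - apply (ll_littleo_absurd u (fun t => t ^ d)); auto.
    + apply (ll_trans _ _ _ Huj), ll_pow_le; auto.
    + apply littleo_of_prec; auto.
  - apply (ll_littleo_absurd (fun t => t ^ (d + 1)) u).
    + apply (ll_trans _ (fun t => t ^ j)); auto. apply ll_pow_le. lia.
    + apply littleo_of_prec; auto. exists 0. intros t Ht. apply pow_nonzero. lra.
    + exists 0. intros t Ht. apply pow_nonzero. lra.
Qed.

Fixpoint falling (a : R) (i : nat) : R :=
  match i with O => 1 | S i => falling a i * (a - INR i) end.

Lemma falling_neq_0 (a : R) (i : nat) : (forall n : nat, a <> INR n) -> falling a i <> 0.
Proof.
  intros Ha. induction i as [|i IH]; simpl; [lra|].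
  apply Rmult_integral_contrapositive. split; auto. specialize (Ha i). lra.
Qed.

Lemma Derive_n_Rpower (a : R) (i : nat) (t : R) : 0 < t ->
  Derive_n (fun t => Rpower t a) i t = falling a i * Rpower t (a - INR i).
Proof.
  revert t. induction i as [|i IH]; intros t Ht.
  - simpl. rewrite Rminus_0_r. ring.
  - simpl Derive_n.
    rewrite (Derive_ext_loc _ (fun s => falling a i * Rpower s (a - INR i))).
    + apply is_derive_unique.
      replace (falling a (S i) * Rpower t (a - INR (S i)))
        with (falling a i * ((a - INR i) * Rpower t (a - INR i - 1)))
        by (simpl falling; rewrite S_INR;
            replace (a - (INR i + 1)) with (a - INR i - 1) by ring; ring).
      apply is_derive_scal, is_derive_Reals, derivable_pt_lim_power; auto.
    + exists (mkposreal (t / 2) ltac:(lra)). intros y Hy. apply IH.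
      assert (Hy' : Rabs (y - t) < t / 2) by apply Hy. apply Rabs_def2 in Hy'. lra.
Qed.

Lemma Rpower_pos (t b : R) : 0 < Rpower t b.
Proof. apply exp_pos. Qed.

Lemma ll_Rpower_le (a b : R) : a <= b -> ll (fun t => Rpower t a) (fun t => Rpower t b).
Proof.
  intros Hab. exists 1. exists 1. intros t Ht.
  rewrite !Rabs_pos_eq by apply Rlt_le, Rpower_pos. rewrite Rmult_1_l.
  apply Rle_Rpower; lra.
Qed.

Lemma regular_Derive_n_Rpower (a : R) : (forall n : nat, a <> INR n) ->
  forall i, regular (Derive_n (fun t => Rpower t a) i).
Proof.
  intros Ha i. set (c := falling a i). set (b := a - INR i).
  assert (Hc : c <> 0) by (apply falling_neq_0; auto).
  assert (He : ev (fun t => c * Rpower t b = Derive_n (fun t => Rpower t a) i t)).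
  { exists 0. intros t Ht. symmetry. apply Derive_n_Rpower; auto. }
  split.
  - apply (ev_mono _ _ He). intros t <-. apply Rmult_integral_contrapositive.
    split; auto. apply Rgt_not_eq, Rpower_pos.
  - destruct (Rtotal_order b 0) as [Hb|[Hb|Hb]].
    + left. apply (is_lim_ext_loc (fun t => c * Rpower t b) _ p_infty _ He).
      replace (Finite 0) with (Rbar_mult c 0) by (simpl; rewrite Rmult_0_r; auto).
      apply is_lim_scal_l, is_lim_exp_minfty, (is_lim_ln_upper _ b 0); auto.
      exists 0. intros; lra.
    + exfalso. apply (Ha i). unfold b in Hb. lra.
    + right. apply (is_lim_ext_loc (fun t => Rabs c * Rpower t b)).
      { apply (ev_mono _ _ He). intros t <-. rewrite Rabs_mult, (Rabs_pos_eq (Rpower t b)); auto.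
        apply Rlt_le, Rpower_pos. }
      apply (is_lim_ln_lower _ b (ln (Rabs c))); auto. exists 0. intros t Ht.
      assert (E : Rabs c * Rpower t b = exp (b * ln t + ln (Rabs c))).
      { rewrite exp_plus, exp_ln by (apply Rabs_pos_lt; auto). apply Rmult_comm. }
      rewrite E. pose proof (exp_ineq1_le (b * ln t + ln (Rabs c))). lra.
Qed.

(** * Logarithms of derivatives *)

Definition lnD (f : R -> R) (i : nat) (t : R) : R := ln (Rabs (Derive_n f i t)).

Lemma ln_le_of_ll (u v : R -> R) : ll u v -> ev (fun t => u t <> 0) ->
  exists K, ev (fun t => ln (Rabs (u t)) <= ln (Rabs (v t)) + K).
Proof.
  intros Huv Hnz. destruct (ll_nonneg _ _ Huv) as [C [HC HCuv]].
  exists (ln (Rmax C 1)).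
  apply (ev_mono _ _ (ev_and _ _ HCuv Hnz)). intros t [H1 H2].
  pose proof (Rabs_pos_lt _ H2). pose proof (Rmax_l C 1). pose proof (Rmax_r C 1).
  pose proof (Rabs_pos (v t)).
  assert (Hv : 0 < Rabs (v t)) by nra.
  rewrite <- ln_mult by lra. apply ln_le; [auto|]. nra.
Qed.

Lemma lnD_Rpower (a : R) (i : nat) (t : R) : (forall n : nat, a <> INR n) -> 0 < t ->
  lnD (fun t => Rpower t a) i t = ln (Rabs (falling a i)) + (a - INR i) * ln t.
Proof.
  intros Ha Ht. unfold lnD. rewrite Derive_n_Rpower, Rabs_mult, (Rabs_pos_eq (Rpower _ _)) by
    (auto || apply Rlt_le, Rpower_pos).
  rewrite ln_mult; [|apply Rabs_pos_lt, falling_neq_0; auto|apply Rpower_pos].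
  unfold Rpower. rewrite ln_exp. auto.
Qed.

Lemma lnD_upper_of_ll_Rpower (f : R -> R) (a : R) (i : nat) :
  (forall n : nat, a <> INR n) -> ev (fun t => Derive_n f i t <> 0) ->
  ll (Derive_n f i) (Derive_n (fun t => Rpower t a) i) ->
  exists K, ev (fun t => lnD f i t <= (a - INR i) * ln t + K).
Proof.
  intros Ha Hnz Hll. destruct (ln_le_of_ll _ _ Hll Hnz) as [K HK].
  exists (ln (Rabs (falling a i)) + K). apply (ev_mono _ _ (ev_and _ _ HK (ev_gt 0))).
  intros t [Ht Hpos]. fold (lnD f i t) (lnD (fun t => Rpower t a) i t) in Ht.
  rewrite lnD_Rpower in Ht by auto. lra.
Qed.

Lemma lnD_lower_of_ll_Rpower (f : R -> R) (a : R) (i : nat) :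
  (forall n : nat, a <> INR n) -> ll (Derive_n (fun t => Rpower t a) i) (Derive_n f i) ->
  exists K, ev (fun t => (a - INR i) * ln t - K <= lnD f i t).
Proof.
  intros Ha Hll. destruct (ln_le_of_ll _ _ Hll (proj1 (regular_Derive_n_Rpower a Ha i))) as [K HK].
  exists (K - ln (Rabs (falling a i))). apply (ev_mono _ _ (ev_and _ _ HK (ev_gt 0))).
  intros t [Ht Hpos]. fold (lnD f i t) (lnD (fun t => Rpower t a) i t) in Ht.
  rewrite lnD_Rpower in Ht by auto. lra.
Qed.

Lemma ll_Rpower_of_prec_pow (u : R -> R) (n : nat) (a : R) :
  prec u (fun t => t ^ n) -> INR n <= a -> ll u (fun t => Rpower t a).
Proof.
  intros Hp Ha. apply (ll_trans _ (fun t => t ^ n)).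
  - destruct (littleo_of_prec u (fun t => t ^ n)) with (eps := 1) as [M HM]; auto; [|lra|].
    + exists 0. intros t Ht. apply pow_nonzero. lra.
    + exists 1. exists M. auto.
  - apply (ll_trans _ (fun t => Rpower t (INR n))); [|apply ll_Rpower_le; auto].
    exists 1. exists 0. intros t Ht. rewrite Rpower_pow by auto. lra.
Qed.

Lemma ln_abs_pinfty (w : R -> R) : regular w ->
  is_lim (fun t => Rabs (ln (Rabs (w t)))) p_infty p_infty.
Proof.
  intros [Hnz Hw]. apply is_lim_pinfty_pinfty. intros M.
  pose proof (Rle_abs M). pose proof (Rabs_pos M).
  destruct Hw as [Hw|Hw].
  - rewrite is_lim_pinfty_real in Hw.
    apply (ev_mono _ _ (ev_and _ _ (Hw (exp (- Rabs M)) (exp_pos _)) Hnz)). intros t [H1 H2].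
    rewrite Rminus_0_r in H1. apply Rabs_pos_lt in H2.
    assert (ln (Rabs (w t)) < - Rabs M)
      by (rewrite <- (ln_exp (- Rabs M)); apply ln_increasing; auto).
    rewrite Rabs_left; lra.
  - rewrite is_lim_pinfty_pinfty in Hw. apply (ev_mono _ _ (Hw (exp (Rabs M)))). intros t H1.
    assert (Rabs M < ln (Rabs (w t))).
    { rewrite <- (ln_exp (Rabs M)) at 1. apply ln_increasing; auto. apply exp_pos. }
    rewrite Rabs_pos_eq; lra.
Qed.

Lemma is_derive_ln_abs (w : R -> R) (t dw : R) : is_derive w t dw -> w t <> 0 ->
  is_derive (fun s => ln (Rabs (w s))) t (dw / w t).
Proof.
  intros Hd Hz. pose proof (Rabs_pos_lt _ Hz) as Hp.
  pose proof (is_derive_comp ln (fun s => Rabs (w s)) t _ _ (is_derive_ln _ Hp)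
                (is_derive_Rabs w t dw Hd Hz)) as Hc.
  replace (dw / w t) with (scal (sign (w t) * dw) (/ Rabs (w t))); [exact Hc|].
  unfold scal; simpl; unfold mult; simpl.
  destruct (Rlt_dec 0 (w t)).
  - rewrite sign_eq_1, Rabs_pos_eq by lra. field; auto.
  - rewrite sign_eq_m1, Rabs_left by lra. field; auto.
Qed.

Lemma littleo_inv_of_littleo_mul (u v : R -> R) :
  littleo v (fun t => t * u t) -> ev (fun t => v t <> 0) ->
  littleo (fun t => / t) (fun t => u t / v t).
Proof.
  intros Hsmall Hnz eps He.
  apply (ev_mono _ _ (ev_and _ _ (ev_and _ _ (Hsmall eps He) Hnz) (ev_gt 0))).
  intros t [[H1 H0] Ht]. pose proof (Rabs_pos_lt _ H0).
  rewrite Rabs_mult, (Rabs_pos_eq t) in H1 by lra.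
  rewrite Rabs_div, Rabs_pos_eq by (auto || apply Rlt_le, Rinv_0_lt_compat; auto).
  apply (Rmult_le_reg_r (t * Rabs (v t))); [nra|].
  replace (/ t * (t * Rabs (v t))) with (Rabs (v t)) by (field; lra).
  replace (eps * (Rabs (u t) / Rabs (v t)) * (t * Rabs (v t))) with (eps * (t * Rabs (u t)))
    by (field; lra).
  exact H1.
Qed.

Lemma ll_ln_of_affine_bounds (x : R -> R) (a b K : R) :
  ev (fun t => a * ln t - K <= x t <= b * ln t + K) -> ll x ln.
Proof.
  intros Hx. exists (Rabs a + Rabs b + Rabs K).
  apply (ev_mono _ _ (ev_and _ _ Hx (ev_gt (exp 1)))). intros t [[H1 H2] Ht].
  assert (HL : 1 <= ln t).
  { rewrite <- (ln_exp 1) at 1. apply ln_le; [apply exp_pos|lra]. }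
  rewrite (Rabs_pos_eq (ln t)) by lra.
  assert (- (Rabs a * ln t) <= a * ln t).
  { replace (- (Rabs a * ln t)) with (- Rabs a * ln t) by ring.
    apply Rmult_le_compat_r; [lra|].
    pose proof (Rle_abs (- a)). rewrite Rabs_Ropp in *. lra. }
  assert (b * ln t <= Rabs b * ln t) by (apply Rmult_le_compat_r; [lra|apply Rle_abs]).
  assert (Rabs K <= Rabs K * ln t) by (pose proof (Rabs_pos K); nra).
  assert (0 <= Rabs a * ln t) by (apply Rmult_le_pos; [apply Rabs_pos|lra]).
  assert (0 <= Rabs b * ln t) by (apply Rmult_le_pos; [apply Rabs_pos|lra]).
  pose proof (Rle_abs K). pose proof (Rle_abs (- K)). rewrite Rabs_Ropp in *.
  apply Rabs_le. lra.
Qed.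

Record deriv_profile (H : (R -> R) -> Prop) (f : R -> R) (δ A : R) : Prop := {
  dp_hardy : H f;
  dp_pos : 0 < δ;
  dp_regular : forall i, regular (Derive_n f i);
  dp_lnD_bounds : forall i, exists K,
    ev (fun t => (δ - INR i) * ln t - K <= lnD f i t <= (A - INR i) * ln t + K);
  dp_lnD_succ : forall j, exists K, ev (fun t => lnD f (S j) t <= lnD f j t - ln t + K)
}.

Arguments dp_hardy {H f δ A}.
Arguments dp_pos {H f δ A}.
Arguments dp_regular {H f δ A}.
Arguments dp_lnD_bounds {H f δ A}.
Arguments dp_lnD_succ {H f δ A}.

(** * Hardy fields *)

Section HardyField.
Variable H : (R -> R) -> Prop.
Hypothesis HH : GoodHardyField H.
Let HF : HardyField H := ghf_hardy H HH.

Lemma hardy_germ (u v : R -> R) : H u -> ev (fun t => u t = v t) -> H v.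
Proof. apply (hf_germ H HF). Qed.

Lemma hardy_mult (u v : R -> R) : H u -> H v -> H (fun t => u t * v t).
Proof. apply (hf_mult H HF). Qed.

Lemma hardy_scal (c : R) (u : R -> R) : H u -> H (fun t => c * u t).
Proof. intros; apply hardy_mult; auto. apply (hf_const H HF). Qed.

Lemma hardy_inv (u : R -> R) : H u -> ev (fun t => u t <> 0) -> H (fun t => / u t).
Proof.
  intros Hu Hnz. apply (hf_inv H HF u Hu). intros Hz.
  destruct (ev_ex _ (ev_and _ _ Hnz Hz)) as [t [H1 H2]]. auto.
Qed.

Lemma hardy_div (u v : R -> R) : H u -> H v -> ev (fun t => v t <> 0) -> H (fun t => u t / v t).
Proof. intros. apply hardy_mult; auto. apply hardy_inv; auto. Qed.

Lemma hardy_id : H (fun t => t).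
Proof. apply (ghf_LE H HH). constructor. Qed.

Lemma hardy_Rpower (a : R) : H (fun t => Rpower t a).
Proof.
  apply (ghf_LE H HH). unfold Rpower. apply LE_exp, LE_mult; [constructor|].
  apply LE_ln; [constructor|]. exists 0. auto.
Qed.

Lemma hardy_Derive_n (u : R -> R) (n : nat) : H u -> H (Derive_n u n).
Proof.
  intros Hu. induction n as [|n IH]; [exact Hu|].
  apply (hardy_germ (Derive (Derive_n u n))); [apply (hf_diff H HF); auto|].
  exists 0. reflexivity.
Qed.

Lemma hardy_is_derive_n (u : R -> R) (n : nat) :
  H u -> ev (fun t => is_derive (Derive_n u n) t (Derive_n u (S n) t)).
Proof.
  intros Hu. destruct (hf_diff H HF _ (hardy_Derive_n u n Hu)) as [He _].
  apply (ev_mono _ _ He). intros t Ht. apply Derive_correct; auto.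
Qed.

Lemma hardy_zero_or_nonzero (u : R -> R) :
  H u -> ev (fun t => u t = 0) \/ ev (fun t => u t <> 0).
Proof.
  intros Hu. destruct (classic (ev (fun t => u t = 0))) as [Hz|Hz]; [auto|].
  right. apply (hf_inv H HF u Hu Hz).
Qed.

Lemma hardy_sign (u : R -> R) :
  H u -> ev (fun t => 0 < u t) \/ ev (fun t => u t < 0) \/ ev (fun t => u t = 0).
Proof.
  intros Hu. destruct (hardy_zero_or_nonzero u Hu) as [Hz|Hnz]; [auto|].
  destruct (ev_and _ _ Hnz (proj1 (hf_diff H HF u Hu))) as [M HM].
  destruct (constant_sign u M) as [Hp|Hn].
  - intros t Ht. destruct (HM t Ht). split; auto. apply ex_derive_continuity_pt; auto.
  - left. exists M. auto.
  - right; left. exists M. auto.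
Qed.

Lemma hardy_abs (u : R -> R) : H u -> H (fun t => Rabs (u t)).
Proof.
  intros Hu. destruct (hardy_sign u Hu) as [Hs|[Hs|Hs]].
  - apply (hardy_germ u); auto. apply (ev_mono _ _ Hs). intros t Ht. rewrite Rabs_pos_eq; lra.
  - apply (hardy_germ (fun t => (-1) * u t)); [apply hardy_scal; auto|].
    apply (ev_mono _ _ Hs). intros t Ht. rewrite Rabs_left; lra.
  - apply (hardy_germ u); auto. apply (ev_mono _ _ Hs). intros t Ht. rewrite Ht, Rabs_R0; auto.
Qed.

(* An element of H is eventually monotone, its derivative having an eventual sign. *)
Lemma hardy_has_lim (u : R -> R) : H u -> exists L, is_lim u p_infty L.
Proof.
  intros Hu. destruct (hardy_is_derive_n u 0 Hu) as [M0 HM0].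
  destruct (hardy_sign _ (hardy_Derive_n u 1 Hu)) as [[M HM]|[[M HM]|[M HM]]];
    set (M1 := Rmax M0 M); assert (M0 <= M1 /\ M <= M1) by (split; [apply Rmax_l|apply Rmax_r]).
  - apply (nondecreasing_has_lim u M1). apply (nondecreasing_of_derive u (Derive_n u 1)).
    + intros t Ht. apply HM0. lra.
    + intros t Ht. left. apply HM. lra.
  - destruct (nondecreasing_has_lim (fun t => - u t) M1) as [L HL].
    + apply (nondecreasing_of_derive _ (fun t => - Derive_n u 1 t)).
      * intros t Ht. apply (is_derive_opp u), HM0. lra.
      * intros t Ht. assert (Derive_n u 1 t < 0) by (apply HM; lra). lra.
    + exists (Rbar_opp L). apply is_lim_opp in HL.
      apply (is_lim_ext _ _ _ _ (fun t => Ropp_involutive (u t)) HL).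
  - apply (nondecreasing_has_lim u M1). apply (nondecreasing_of_derive u (Derive_n u 1)).
    + intros t Ht. apply HM0. lra.
    + intros t Ht. right. symmetry. apply HM. lra.
Qed.

Lemma hardy_ll_or_littleo (u v : R -> R) :
  H u -> H v -> ev (fun t => v t <> 0) -> ll u v \/ littleo v u.
Proof.
  intros Hu Hv Hnz.
  destruct (hardy_has_lim _ (hardy_div u v Hu Hv Hnz)) as [L HL].
  apply is_lim_Rabs in HL. pose proof (is_lim_Rabs_nonneg _ _ HL) as HL0.
  destruct (Rbar_abs L) as [l| |]; simpl in HL0; try contradiction.
  - left. apply (ll_of_ratio_lim u v l); auto.
  - right. apply littleo_of_ratio_pinfty; auto.
Qed.

Lemma hardy_sim_of_ll (u v : R -> R) :
  H u -> H v -> ev (fun t => u t <> 0) -> ev (fun t => v t <> 0) -> ll u v -> ll v u -> sim u v.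
Proof.
  intros Hu Hv Hnu Hnv Huv Hvu.
  destruct (hardy_has_lim _ (hardy_div u v Hu Hv Hnv)) as [[l| |] HL].
  - exists l. split; auto. intros ->.
    apply (ll_littleo_absurd v u); auto. apply littleo_of_prec; auto.
  - exfalso. apply (ll_littleo_absurd u v); auto.
    apply littleo_of_ratio_pinfty; auto. apply (is_lim_Rabs _ _ _ HL).
  - exfalso. apply (ll_littleo_absurd u v); auto.
    apply littleo_of_ratio_pinfty; auto. apply (is_lim_Rabs _ _ _ HL).
Qed.

Lemma hardy_preceq_of_not_prec (u v : R -> R) :
  H u -> H v -> ev (fun t => v t <> 0) -> ~ prec u v -> preceq v u.
Proof.
  intros Hu Hv Hnz Hnp.
  destruct (hardy_has_lim _ (hardy_div u v Hu Hv Hnz)) as [L HL].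
  exists (Rbar_abs L). split; [|apply is_lim_Rabs; auto].
  intros HL0. apply Hnp. apply is_lim_Rabs_0. rewrite <- HL0. apply is_lim_Rabs. auto.
Qed.

(* [v^(i+1) / u^(i+1)] has a limit; an infinite one would give [u^(i) = o(v^(i))] by l'Hôpital. *)
Lemma ll_Derive_n (u v : R -> R) : H u -> H v ->
  (forall i, regular (Derive_n u i)) -> (forall i, regular (Derive_n v i)) ->
  ll v u -> forall i, ll (Derive_n v i) (Derive_n u i).
Proof.
  intros Hu Hv Gu Gv H0 i. induction i as [|i IH]; [exact H0|].
  destruct (hardy_ll_or_littleo (Derive_n v (S i)) (Derive_n u (S i)))
    as [Hll|Hsmall]; auto using hardy_Derive_n; [apply Gu|].
  exfalso. apply (ll_littleo_absurd (Derive_n v i) (Derive_n u i)); auto; [|apply Gv].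
  destruct (Gu i), (Gv i).
  apply (littleo_of_littleo_derive _ _ (Derive_n u (S i)) (Derive_n v (S i))); auto.
  apply (ev_mono _ _ (ev_and _ _ (ev_and _ _ (hardy_is_derive_n u i Hu) (hardy_is_derive_n v i Hv))
                                 (proj1 (Gv (S i))))).
  tauto.
Qed.

(* If [u^(j)] tended to [c <> 0], integrating [j] times against [t ^ j / j!] would give
   [u ≍ t ^ j]. *)
Lemma strongly_nonpoly_Derive_n_lim (u : R -> R) (j : nat) (c : R) :
  H u -> strongly_nonpoly u -> ev (fun t => u t <> 0) ->
  (forall i, (i < j)%nat -> regular (Derive_n u i)) -> ev (fun t => Derive_n u j t <> 0) ->
  c <> 0 -> is_lim (Derive_n u j) p_infty c -> False.
Proof.
  intros Hu Snp Hnz Hreg Hj Hc Hl.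
  set (V := fun i => monomial (j - i)).
  assert (HV : forall i, (i < j)%nat ->
    ev (fun t => is_derive (V i) t (V (S i) t) /\ V (S i) t <> 0) /\ zero_or_infinite (V i)).
  { intros i Hi. unfold V. replace (j - i)%nat with (S (j - S i)) by lia.
    split; [|apply zero_or_infinite_monomial].
    exists 0. intros t Ht. split; [apply is_derive_monomial|].
    apply Rgt_not_eq, monomial_pos; auto. }
  assert (Hsim : sim (Derive_n u j) (V j)).
  { exists c. split; auto. apply (is_lim_ext (Derive_n u j)); auto.
    intros t. unfold V, monomial. rewrite Nat.sub_diag. simpl. field. }
  assert (HV0 : ev (fun t => V j t <> 0)).
  { exists 0. intros t Ht. apply Rgt_not_eq, monomial_pos; auto. }
  assert (HV0j : V 0%nat = monomial j) by (unfold V; rewrite Nat.sub_0_r; auto).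
  apply (strongly_nonpoly_not_ll_pow u j Snp Hnz).
  - apply (ll_trans _ (V 0%nat)); [|rewrite HV0j; apply ll_monomial_pow].
    apply (ll_of_ll_derive_chain j (Derive_n u) V); [| |apply ll_of_sim; auto].
    + intros i Hi. apply (ev_mono _ _ (ev_and _ _ (hardy_is_derive_n u i Hu) (proj1 (HV i Hi)))).
      tauto.
    + intros i Hi. split; [apply Hreg|apply HV]; auto.
  - apply (ll_trans _ (V 0%nat)); [rewrite HV0j; apply ll_pow_monomial|].
    apply (ll_of_ll_derive_chain j V (Derive_n u)); [| |apply ll_of_sim, sim_sym; auto].
    + intros i Hi.
      assert (Hnext : ev (fun t => Derive_n u (S i) t <> 0)).
      { destruct (Nat.eq_dec (S i) j) as [<-|]; auto. apply Hreg. lia. }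
      apply (ev_mono _ _ (ev_and _ _ (ev_and _ _ (proj1 (HV i Hi)) (hardy_is_derive_n u i Hu))
                                     Hnext)).
      tauto.
    + intros i Hi. split; [apply HV|apply Hreg]; auto.
Qed.

Lemma regular_Derive_n_of_strongly_nonpoly (u : R -> R) :
  H u -> strongly_nonpoly u -> ev (fun t => u t <> 0) -> forall j, regular (Derive_n u j).
Proof.
  intros Hu Snp Hnz j. induction j as [j IH] using (well_founded_induction Wf_nat.lt_wf).
  destruct (hardy_zero_or_nonzero _ (hardy_Derive_n u j Hu)) as [Hz|Hj].
  - exfalso. destruct j as [|m].
    + destruct (ev_ex _ (ev_and _ _ Hz Hnz)) as [t [H1 H2]]. auto.
    + destruct (eventually_constant_of_derive_0 (Derive_n u m)) as [c Hc].
      * apply (ev_mono _ _ (ev_and _ _ Hz (hardy_is_derive_n u m Hu))).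
        intros t [H1 H2]. rewrite <- H1. exact H2.
      * apply (regular_not_eventually_constant _ c (IH m ltac:(lia)) Hc).
  - split; auto.
    destruct (hardy_has_lim _ (hardy_Derive_n u j Hu)) as [[c| |] HL].
    + destruct (Req_dec c 0) as [->|Hc]; [left; auto|].
      exfalso. apply (strongly_nonpoly_Derive_n_lim u j c); auto.
    + right. apply (is_lim_Rabs _ _ _ HL).
    + right. apply (is_lim_Rabs _ _ _ HL).
Qed.

Lemma ll_of_ll_Derive_n (u v : R -> R) (j : nat) : H u -> H v ->
  (forall i, regular (Derive_n u i)) -> (forall i, regular (Derive_n v i)) ->
  ll (Derive_n u j) (Derive_n v j) -> ll u v.
Proof.
  intros Hu Hv Gu Gv Hj.
  apply (ll_of_ll_derive_chain j (Derive_n u) (Derive_n v)); auto.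
  - intros i _. apply (ev_mono _ _ (ev_and _ _ (ev_and _ _ (hardy_is_derive_n u i Hu)
                                                 (hardy_is_derive_n v i Hv)) (proj1 (Gv (S i))))).
    tauto.
  - intros i _. split; [apply Gu|apply Gv].
Qed.

Lemma hardy_Rpower_comp (w : R -> R) (a : R) : H w -> ev (fun t => 0 < w t) ->
  is_lim w p_infty 0 \/ is_lim w p_infty p_infty -> H (fun t => Rpower (w t) a).
Proof.
  intros Hw Hpos [Hl|Hl].
  - apply (hardy_germ (fun t => Rpower (/ w t) (- a))).
    + apply (ghf_comp H HH (fun t => Rpower t (- a))); [apply hardy_Rpower| |].
      * apply hardy_inv; auto. apply (ev_mono _ _ Hpos). intros; lra.
      * apply is_lim_Rinv_0_right; auto.
    + apply (ev_mono _ _ Hpos). intros t Ht. unfold Rpower. rewrite ln_Rinv by auto.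
      f_equal. ring.
  - apply (ghf_comp H HH (fun t => Rpower t a)); auto. apply hardy_Rpower.
Qed.

Lemma lnD_bounds_of_strongly_nonpoly (f : R -> R) (d1 : R) :
  H f -> strongly_nonpoly f -> 0 < d1 -> ll (fun t => Rpower t d1) f ->
  exists δ A, 0 < δ /\ (forall i, regular (Derive_n f i)) /\ forall i, exists K,
    ev (fun t => (δ - INR i) * ln t - K <= lnD f i t <= (A - INR i) * ln t + K).
Proof.
  intros Hf Snp Hd1 Hlow.
  assert (Hnz : ev (fun t => f t <> 0)).
  { destruct Hlow as [C HC]. apply (ev_mono _ _ HC). intros t Ht Hz.
    rewrite Hz, Rabs_R0, Rmult_0_r, Rabs_pos_eq in Ht by apply Rlt_le, Rpower_pos.
    pose proof (Rpower_pos t d1). lra. }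
  pose proof (regular_Derive_n_of_strongly_nonpoly f Hf Snp Hnz) as Hreg.
  destruct Snp as [d [_ Hup]].
  (* Off the integers, so that no derivative of [t ^ δ] or [t ^ A] vanishes. *)
  set (δ := Rmin d1 (1/2) / 2). set (A := INR d + 3/2).
  assert (Hδ : 0 < δ < 1 /\ δ <= d1) by (unfold δ; apply Rmin_case_strong; lra).
  assert (NA : forall n : nat, A <> INR n).
  { intros n Hn. assert (Hn2 : INR (2 * d + 3) = INR (2 * n))
      by (rewrite plus_INR, !mult_INR; simpl; unfold A in Hn; lra).
    apply INR_eq in Hn2. lia. }
  assert (Nδ : forall n : nat, δ <> INR n).
  { intros [|n] Hn; [simpl in Hn; lra|]. rewrite S_INR in Hn. pose proof (pos_INR n). lra. }
  assert (Hupper : ll f (fun t => Rpower t A)).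
  { apply (ll_Rpower_of_prec_pow f (d + 1)); auto. rewrite plus_INR. simpl. unfold A. lra. }
  assert (Hlower : ll (fun t => Rpower t δ) f)
    by apply (ll_trans _ _ _ (ll_Rpower_le δ d1 ltac:(lra)) Hlow).
  exists δ, A. split; [lra|]. split; auto. intros i.
  destruct (lnD_upper_of_ll_Rpower f A i NA (proj1 (Hreg i))) as [K1 HK1].
  { apply (ll_Derive_n _ _ (hardy_Rpower A) Hf (regular_Derive_n_Rpower A NA) Hreg Hupper). }
  destruct (lnD_lower_of_ll_Rpower f δ i Nδ) as [K2 HK2].
  { apply (ll_Derive_n _ _ Hf (hardy_Rpower δ) Hreg (regular_Derive_n_Rpower δ Nδ) Hlower). }
  exists (Rmax K1 K2). pose proof (Rmax_l K1 K2). pose proof (Rmax_r K1 K2).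
  apply (ev_mono _ _ (ev_and _ _ HK1 HK2)). intros t [Hup1 Hlo2]. lra.
Qed.

Lemma lnD_succ_le (f : R -> R) (j : nat) :
  H f -> (forall i, regular (Derive_n f i)) -> ll (lnD f j) ln ->
  exists K, ev (fun t => lnD f (S j) t <= lnD f j t - ln t + K).
Proof.
  intros Hf Hreg Hln.
  destruct (Hreg j) as [Hnz0 _]. destruct (Hreg (S j)) as [Hnz1 _].
  assert (Hnz : ev (fun t => 0 < t /\ Derive_n f j t <> 0 /\ Derive_n f (S j) t <> 0))
    by (apply ev_and; [apply ev_gt|apply ev_and; auto]).
  destruct (hardy_ll_or_littleo (fun t => t * Derive_n f (S j) t) (Derive_n f j)) as [Hll|Hsmall];
    auto using hardy_mult, hardy_id, hardy_Derive_n.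
  - destruct (ln_le_of_ll _ _ Hll) as [K HK].
    { apply (ev_mono _ _ Hnz). intros t Ht.
      apply Rmult_integral_contrapositive. split; lra || tauto. }
    exists K. apply (ev_mono _ _ (ev_and _ _ HK Hnz)). intros t [H1 [H2 [_ H3]]].
    unfold lnD.
    rewrite Rabs_mult, ln_mult, (Rabs_pos_eq t) in H1 by (try apply Rabs_pos_lt; lra || auto).
    lra.
  - (* Otherwise l'Hôpital would make [ln t] negligible against [lnD f j = O(ln t)]. *)
    exfalso. apply (ll_littleo_absurd (lnD f j) ln Hln).
    + apply (littleo_of_littleo_derive ln (lnD f j) (fun t => / t)
               (fun t => Derive_n f (S j) t / Derive_n f j t)).
      * apply (ev_mono _ _ (ev_and _ _ Hnz (hardy_is_derive_n f j Hf))). intros t [[Ht [H0 H1]] Hd].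
        split; [apply is_derive_ln; auto|]. split; [apply is_derive_ln_abs; auto|].
        unfold Rdiv. apply Rmult_integral_contrapositive.
        split; auto. apply Rinv_neq_0_compat; auto.
      * right. apply (is_lim_Rabs _ _ _ is_lim_ln_p).
      * right. apply ln_abs_pinfty. auto.
      * apply littleo_inv_of_littleo_mul; auto.
    + pose proof (ln_abs_pinfty _ (Hreg j)) as Hinf. rewrite is_lim_pinfty_pinfty in Hinf.
      apply (ev_mono _ _ (Hinf 0)). intros t Ht Hz.
      unfold lnD in Hz. rewrite Hz, Rabs_R0 in Ht. lra.
Qed.

Lemma deriv_profile_of_strongly_nonpoly (f : R -> R) (d1 : R) :
  H f -> strongly_nonpoly f -> 0 < d1 -> ll (fun t => Rpower t d1) f ->
  exists δ A, deriv_profile H f δ A.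
Proof.
  intros Hf Snp Hd1 Hlow.
  destruct (lnD_bounds_of_strongly_nonpoly f d1 Hf Snp Hd1 Hlow) as [δ [A [Hδ [Hreg Hb]]]].
  exists δ, A. constructor; auto. intros j. apply lnD_succ_le; auto.
  destruct (Hb j) as [K HK]. apply (ll_ln_of_affine_bounds _ _ _ _ HK).
Qed.

End HardyField.

(** * The scales [|f^(k)|^(-1/k)] *)

Definition ln_dscale (f : R -> R) (k : nat) (t : R) : R := - (1 / INR k) * lnD f k t.

Lemma dscale_exp (f : R -> R) (k : nat) (t : R) : dscale f k t = exp (ln_dscale f k t).
Proof. reflexivity. Qed.

Lemma dscale_pos (f : R -> R) (k : nat) (t : R) : 0 < dscale f k t.
Proof. apply exp_pos. Qed.

Lemma dscale_div (f g : R -> R) (k l : nat) (t : R) :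
  dscale f k t / dscale g l t = exp (ln_dscale f k t - ln_dscale g l t).
Proof. rewrite !dscale_exp. unfold Rminus. rewrite exp_plus, exp_Ropp. reflexivity. Qed.

Lemma ll_dscale_of_le (f g : R -> R) (k l : nat) (K : R) :
  ev (fun t => ln_dscale f k t - ln_dscale g l t <= K) -> ll (dscale f k) (dscale g l).
Proof.
  intros HK. exists (exp K). apply (ev_mono _ _ HK). intros t Ht.
  pose proof (dscale_pos f k t). pose proof (dscale_pos g l t).
  rewrite !Rabs_pos_eq by lra.
  apply (Rmult_le_reg_r (/ dscale g l t)); [apply Rinv_0_lt_compat; lra|].
  replace (exp K * dscale g l t * / dscale g l t) with (exp K) by (field; lra).
  change (dscale f k t * / dscale g l t) with (dscale f k t / dscale g l t).
  rewrite dscale_div. destruct Ht as [Ht| ->]; [left; apply exp_increasing; auto|lra].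
Qed.

Lemma prec_dscale_of_minfty (f g : R -> R) (k l : nat) :
  is_lim (fun t => ln_dscale f k t - ln_dscale g l t) p_infty m_infty ->
  prec (dscale f k) (dscale g l).
Proof.
  intros Hl. unfold prec.
  apply (is_lim_ext (fun t => exp (ln_dscale f k t - ln_dscale g l t))).
  - intros t. symmetry. apply dscale_div.
  - apply is_lim_exp_minfty. exact Hl.
Qed.

Lemma is_lim_minfty_scal (c : R) (y : R -> R) :
  0 < c -> is_lim y p_infty m_infty -> is_lim (fun t => c * y t) p_infty m_infty.
Proof.
  intros Hc Hy. rewrite is_lim_pinfty_minfty in *. intros M.
  apply (ev_mono _ _ (Hy (M / c))). intros t Ht.
  apply (Rmult_lt_compat_l c) in Ht; auto.
  replace (c * (M / c)) with M in Ht by (field; lra). exact Ht.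
Qed.

Lemma littleo_ln_minfty (u v : R -> R) : littleo u v -> ev (fun t => u t <> 0) ->
  is_lim (fun t => ln (Rabs (u t)) - ln (Rabs (v t))) p_infty m_infty.
Proof.
  intros Huv Hnz. apply is_lim_pinfty_minfty. intros M.
  apply (ev_mono _ _ (ev_and _ _ (Huv (exp (M - 1)) (exp_pos _)) Hnz)). intros t [H1 H2].
  pose proof (Rabs_pos_lt _ H2). pose proof (Rabs_pos (v t)).
  assert (Hv : 0 < Rabs (v t)) by (pose proof (exp_pos (M - 1)); nra).
  apply ln_le in H1; auto. rewrite ln_mult, ln_exp in H1 by (auto || apply exp_pos). lra.
Qed.

Lemma prec_dscale_of_littleo (f g : R -> R) (k : nat) : (1 <= k)%nat ->
  ev (fun t => Derive_n g k t <> 0) -> littleo (Derive_n g k) (Derive_n f k) ->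
  prec (dscale f k) (dscale g k).
Proof.
  intros Hk Hnz Hsmall. apply prec_dscale_of_minfty.
  assert (Hr : 0 < / INR k) by (apply Rinv_0_lt_compat, lt_0_INR; lia).
  apply (is_lim_ext (fun t => / INR k * (lnD g k t - lnD f k t))).
  - intros t. unfold ln_dscale. field. apply Rgt_not_eq, lt_0_INR. lia.
  - apply is_lim_minfty_scal; auto. apply littleo_ln_minfty; auto.
Qed.

Lemma exists_crossing (P : nat -> Prop) (a n : nat) :
  ~ P a -> P (a + n)%nat -> exists l, (a <= l)%nat /\ ~ P l /\ P (S l).
Proof.
  intros Ha. induction n as [|n IH]; intros Hn.
  - rewrite Nat.add_0_r in Hn. contradiction.
  - destruct (classic (P (a + n)%nat)) as [Hp|Hp]; auto.
    exists (a + n)%nat. rewrite <- Nat.add_succ_r. split; [lia|auto].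
Qed.

Section DScale.
Variable H : (R -> R) -> Prop.
Hypothesis HH : GoodHardyField H.

Section OneProfile.
Variables (f : R -> R) (δ A : R).
Hypothesis Pf : deriv_profile H f δ A.

Lemma ln_dscale_bounds (k : nat) : (1 <= k)%nat -> exists K,
  ev (fun t => (1 - A / INR k) * ln t - K <= ln_dscale f k t <= (1 - δ / INR k) * ln t + K).
Proof.
  intros Hk. destruct (dp_lnD_bounds Pf k) as [K HK].
  assert (Hr : 1 <= INR k) by (apply (le_INR 1); lia).
  exists (Rabs K / INR k). apply (ev_mono _ _ HK). intros t [H1 H2]. unfold ln_dscale.
  set (r := INR k) in *. set (X := lnD f k t) in *. set (L := ln t) in *.
  assert (E1 : - (1 / r) * X - ((1 - A / r) * L - Rabs K / r) = / r * ((A - r) * L + Rabs K - X))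
    by (field; lra).
  assert (E2 : (1 - δ / r) * L + Rabs K / r - - (1 / r) * X = / r * (X - ((δ - r) * L - Rabs K)))
    by (field; lra).
  pose proof (Rle_abs K). pose proof (Rle_abs (- K)). rewrite Rabs_Ropp in *.
  assert (Hr' : 0 <= / r) by (apply Rlt_le, Rinv_0_lt_compat; lra).
  assert (0 <= / r * ((A - r) * L + Rabs K - X)) by (apply Rmult_le_pos; lra).
  assert (0 <= / r * (X - ((δ - r) * L - Rabs K))) by (apply Rmult_le_pos; lra).
  lra.
Qed.

Lemma ln_dscale_succ_minfty (k : nat) : (1 <= k)%nat ->
  is_lim (fun t => ln_dscale f k t - ln_dscale f (S k) t) p_infty m_infty.
Proof.
  intros Hk. destruct (dp_lnD_bounds Pf k) as [K0 HK0].
  destruct (dp_lnD_succ Pf k) as [K HK]. pose proof (dp_pos Pf).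
  assert (Hr : 1 <= INR k) by (apply (le_INR 1); lia).
  set (r := INR k) in *. set (p := / (r + 1)). set (q := / (r * (r + 1))).
  assert (Hp : 0 < p) by (apply Rinv_0_lt_compat; lra).
  assert (Hq : 0 < q) by (apply Rinv_0_lt_compat; nra).
  apply (is_lim_ln_upper _ (- (q * δ)) (p * K + q * K0)); [nra|].
  apply (ev_mono _ _ (ev_and _ _ HK0 HK)). intros t [[H1 _] H2]. unfold ln_dscale.
  rewrite S_INR. fold r.
  set (X := lnD f k t) in *. set (Y := lnD f (S k) t) in *. set (L := ln t) in *.
  (* The gap is a nonnegative combination of the two profile inequalities. *)
  assert (E : - (q * δ) * L + (p * K + q * K0) - (- (1 / r) * X - - (1 / (r + 1)) * Y)
              = p * (X - L + K - Y) + q * (X - ((δ - r) * L - K0)))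
    by (unfold p, q; field; lra).
  assert (0 <= p * (X - L + K - Y)) by (apply Rmult_le_pos; lra).
  assert (0 <= q * (X - ((δ - r) * L - K0))) by (apply Rmult_le_pos; lra).
  lra.
Qed.

Lemma prec_dscale_succ (k : nat) : (1 <= k)%nat -> prec (dscale f k) (dscale f (S k)).
Proof. intros Hk. apply prec_dscale_of_minfty, ln_dscale_succ_minfty; auto. Qed.

Lemma ll_dscale_add (k n : nat) : (1 <= k)%nat -> ll (dscale f k) (dscale f (k + n)).
Proof.
  intros Hk. induction n as [|n IH].
  - rewrite Nat.add_0_r. exists 1. exists 0. intros; lra.
  - apply (ll_trans _ _ _ IH). rewrite Nat.add_succ_r.
    apply (ll_dscale_of_le _ _ _ _ 0).
    pose proof (ln_dscale_succ_minfty (k + n) ltac:(lia)) as Hs.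
    rewrite is_lim_pinfty_minfty in Hs. apply (ev_mono _ _ (Hs 0)). intros; lra.
Qed.

Lemma abs_Derive_n_exp_lnD (k : nat) : ev (fun t => Rabs (Derive_n f k t) = exp (lnD f k t)).
Proof.
  apply (ev_mono _ _ (proj1 (dp_regular Pf k))). intros t Ht.
  unfold lnD. rewrite exp_ln; auto. apply Rabs_pos_lt; auto.
Qed.

Lemma admissible_of_lt (k : nat) : A < INR k -> admissible f k.
Proof.
  intros Hk. destruct (dp_lnD_bounds Pf k) as [K HK].
  unfold admissible. apply is_lim_Rabs_0.
  apply (is_lim_ext_loc (fun t => exp (lnD f k t))).
  - apply (ev_mono _ _ (abs_Derive_n_exp_lnD k)). auto.
  - apply is_lim_exp_minfty, (is_lim_ln_upper _ (A - INR k) K); [lra|].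
    apply (ev_mono _ _ HK). intros t Ht; apply Ht.
Qed.

Lemma admissible_pos (k : nat) : admissible f k -> (1 <= k)%nat.
Proof.
  intros Hadm. destruct k as [|k]; [exfalso|lia].
  destruct (dp_lnD_bounds Pf 0) as [K HK]. pose proof (dp_pos Pf).
  assert (Hinf : is_lim (fun t => Rabs (Derive_n f 0 t)) p_infty p_infty).
  { apply (is_lim_ext_loc (fun t => exp (lnD f 0 t))).
    - apply (ev_mono _ _ (abs_Derive_n_exp_lnD 0)). auto.
    - apply is_lim_exp_pinfty, (is_lim_ln_lower _ δ (- K)); auto.
      apply (ev_mono _ _ HK). simpl. intros t Ht. lra. }
  apply is_lim_Rabs_0 in Hadm. pose proof (is_lim_pinfty_unique _ _ _ Hadm Hinf). discriminate.
Qed.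

Lemma hardy_dscale (k : nat) : H (dscale f k).
Proof.
  destruct (dp_regular Pf k) as [Hnz Hz].
  apply (hardy_Rpower_comp H HH (fun t => Rabs (Derive_n f k t))).
  - apply (hardy_abs H HH), (hardy_Derive_n H HH), (dp_hardy Pf).
  - apply (ev_mono _ _ Hnz). intros t Ht. apply Rabs_pos_lt; auto.
  - destruct Hz as [Hz|Hz]; [left; apply is_lim_Rabs_0|right]; auto.
Qed.

Lemma Sset_dscale (k : nat) : (1 <= k)%nat -> Sset H f k (dscale f k).
Proof.
  intros Hk. split; [apply hardy_dscale|]. split; [|apply prec_dscale_succ; auto].
  exists 1. split; [intros He; injection He; lra|].
  apply (is_lim_ext (fun _ => 1)); [|apply is_lim_const].
  intros t. unfold Rdiv. rewrite Rinv_r, Rabs_R1; auto. apply Rgt_not_eq, dscale_pos.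
Qed.

End OneProfile.

Section TwoProfiles.
Variables (f g : R -> R) (δf Af δg Ag : R).
Hypotheses (Pf : deriv_profile H f δf Af) (Pg : deriv_profile H g δg Ag).

Lemma ll_dscale_of_ll (k : nat) : (1 <= k)%nat -> ll g f -> ll (dscale f k) (dscale g k).
Proof.
  intros Hk Hgf.
  pose proof (ll_Derive_n H HH f g (dp_hardy Pf) (dp_hardy Pg) (dp_regular Pf) (dp_regular Pg)
                          Hgf k) as Hk'.
  destruct (ln_le_of_ll _ _ Hk' (proj1 (dp_regular Pg k))) as [K HK].
  assert (Hr : 0 < INR k) by (apply lt_0_INR; lia).
  apply (ll_dscale_of_le _ _ _ _ (K / INR k)). apply (ev_mono _ _ HK). intros t Ht.
  fold (lnD g k t) (lnD f k t) in Ht. unfold ln_dscale.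
  assert (E : K / INR k - (- (1 / INR k) * lnD f k t - - (1 / INR k) * lnD g k t)
              = / INR k * (lnD f k t + K - lnD g k t)) by (field; lra).
  assert (0 <= / INR k * (lnD f k t + K - lnD g k t))
    by (apply Rmult_le_pos; [apply Rlt_le, Rinv_0_lt_compat|]; lra).
  lra.
Qed.

Lemma sim_of_preceq_dscale (k : nat) : (1 <= k)%nat -> ll g f ->
  preceq (dscale g k) (dscale f k) -> sim f g.
Proof.
  intros Hk Hgf Hpre.
  pose proof (dp_hardy Pf) as Hf. pose proof (dp_hardy Pg) as Hg.
  destruct (hardy_ll_or_littleo H HH (Derive_n f k) (Derive_n g k)) as [Hll|Hsmall];
    [apply hardy_Derive_n; auto ..|apply (dp_regular Pg)| |].
  - apply (hardy_sim_of_ll H HH); auto; [apply (dp_regular Pf 0)|apply (dp_regular Pg 0)|].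
    apply (ll_of_ll_Derive_n H HH f g k); auto; [apply (dp_regular Pf)|apply (dp_regular Pg)].
  - exfalso. apply (preceq_prec_absurd _ _ Hpre).
    apply prec_dscale_of_littleo; auto. apply (dp_regular Pg).
Qed.

Lemma Sset_inter_le (k l : nat) (h : R -> R) : ll g f ->
  Sset H f k h -> Sset H g l h -> (l <= k)%nat.
Proof.
  intros Hgf [_ [_ Hhf]] [_ [Hgh _]].
  destruct (Compare_dec.le_lt_dec l k) as [|Hkl]; auto. exfalso.
  apply (preceq_prec_absurd _ _ Hgh).
  apply (prec_ll_trans h (dscale f (S k))); auto.
  - exists 0. intros t _. apply Rgt_not_eq, dscale_pos.
  - pose proof (ll_dscale_add f δf Af Pf (S k) (l - S k) ltac:(lia)) as Hchain.
    replace (S k + (l - S k))%nat with l in Hchain by lia.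
    apply (ll_trans _ _ _ Hchain). apply ll_dscale_of_ll; auto. lia.
Qed.

Lemma not_prec_dscale_of_slope (k l : nat) : (1 <= k)%nat -> (1 <= l)%nat ->
  Af * INR l / δg < INR k -> ~ prec (dscale f k) (dscale g l).
Proof.
  intros Hk Hl Hkl Hp. pose proof (dp_pos Pg).
  assert (Hkp : 0 < INR k) by (apply lt_0_INR; lia).
  assert (Hlp : 0 < INR l) by (apply lt_0_INR; lia).
  destruct (ln_dscale_bounds f δf Af Pf k Hk) as [Kf HKf].
  destruct (ln_dscale_bounds g δg Ag Pg l Hl) as [Kg HKg].
  assert (Hs : 0 < δg / INR l - Af / INR k).
  { replace (δg / INR l - Af / INR k) with ((δg * INR k - Af * INR l) / (INR l * INR k))
      by (field; lra).
    apply Rdiv_lt_0_compat; [|nra].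
    apply (Rmult_lt_compat_r δg) in Hkl; auto.
    replace (Af * INR l / δg * δg) with (Af * INR l) in Hkl by (field; lra). lra. }
  assert (Hinf : is_lim (fun t => dscale f k t / dscale g l t) p_infty p_infty).
  { apply (is_lim_ext (fun t => exp (ln_dscale f k t - ln_dscale g l t)));
      [intros t; symmetry; apply dscale_div|].
    apply is_lim_exp_pinfty, (is_lim_ln_lower _ _ (- (Kf + Kg)) Hs).
    apply (ev_mono _ _ (ev_and _ _ HKf HKg)). intros t [Hbf Hbg]. lra. }
  pose proof (is_lim_pinfty_unique _ _ _ Hp Hinf). discriminate.
Qed.

Lemma prec_dscale_of_slope (k l : nat) : (1 <= k)%nat -> (1 <= l)%nat ->
  Ag * INR k / δf < INR l -> prec (dscale f k) (dscale g l).
Proof.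
  intros Hk Hl Hkl. pose proof (dp_pos Pf).
  assert (Hkp : 0 < INR k) by (apply lt_0_INR; lia).
  assert (Hlp : 0 < INR l) by (apply lt_0_INR; lia).
  destruct (ln_dscale_bounds f δf Af Pf k Hk) as [Kf HKf].
  destruct (ln_dscale_bounds g δg Ag Pg l Hl) as [Kg HKg].
  assert (Hs : Ag / INR l - δf / INR k < 0).
  { replace (Ag / INR l - δf / INR k) with (- ((δf * INR l - Ag * INR k) / (INR l * INR k)))
      by (field; lra).
    apply Ropp_lt_gt_0_contravar, Rdiv_lt_0_compat; [|nra].
    apply (Rmult_lt_compat_r δf) in Hkl; auto.
    replace (Ag * INR k / δf * δf) with (Ag * INR k) in Hkl by (field; lra). lra. }
  apply prec_dscale_of_minfty, (is_lim_ln_upper _ _ (Kf + Kg) Hs).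
  apply (ev_mono _ _ (ev_and _ _ HKf HKg)). intros t [Hbf Hbg]. lra.
Qed.

End TwoProfiles.

Lemma sim_dscale_of_ll (f g : R -> R) (δf Af δg Ag : R) (k : nat) :
  deriv_profile H f δf Af -> deriv_profile H g δg Ag -> (1 <= k)%nat ->
  ll f g -> ll g f -> sim (dscale f k) (dscale g k).
Proof.
  intros Pf Pg Hk Hfg Hgf.
  apply (hardy_sim_of_ll H HH); [apply (hardy_dscale _ _ _ Pf)|apply (hardy_dscale _ _ _ Pg)|
    exists 0; intros t _; apply Rgt_not_eq, dscale_pos ..| |].
  - apply (ll_dscale_of_ll f g δf Af δg Ag); auto.
  - apply (ll_dscale_of_ll g f δg Ag δf Af); auto.
Qed.

Lemma Sset_iff_of_ll (f g : R -> R) (δf Af δg Ag : R) (k : nat) :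
  deriv_profile H f δf Af -> deriv_profile H g δg Ag -> (1 <= k)%nat ->
  ll f g -> ll g f -> forall h, Sset H f k h <-> Sset H g k h.
Proof.
  intros Pf Pg Hk Hfg Hgf h.
  pose proof (sim_dscale_of_ll f g δf Af δg Ag k Pf Pg Hk Hfg Hgf) as Hs.
  pose proof (sim_dscale_of_ll f g δf Af δg Ag (S k) Pf Pg ltac:(lia) Hfg Hgf) as Hs1.
  assert (Hpos : forall u j t, dscale u j t <> 0) by (intros; apply Rgt_not_eq, dscale_pos).
  assert (Hev : forall u j, ev (fun t => dscale u j t <> 0)) by (intros; exists 0; auto).
  unfold Sset. split; intros [Hh [Hpre Hprec]]; (split; [exact Hh|split]).
  - apply (preceq_sim (dscale f k)); auto.
  - apply (prec_ll_trans h (dscale f (S k))); auto. apply ll_of_sim; auto.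
  - apply (preceq_sim (dscale g k)); auto. apply sim_sym; auto.
  - apply (prec_ll_trans h (dscale g (S k))); auto. apply ll_of_sim, sim_sym; auto.
Qed.

Lemma Sset_inter_unbounded (f g : R -> R) (δf Af δg Ag : R) (N : nat) :
  deriv_profile H f δf Af -> deriv_profile H g δg Ag ->
  exists k l : nat, (N <= k + l)%nat /\ admissible f k /\ admissible g l /\
    exists h, Sset H f k h /\ Sset H g l h.
Proof.
  intros Pf Pg.
  destruct (nat_above Ag) as [l0 Hl0].
  pose proof (admissible_pos g δg Ag Pg l0 (admissible_of_lt g δg Ag Pg l0 Hl0)) as Hl01.
  destruct (nat_above (Rmax Af (Af * INR l0 / δg))) as [k0 Hk0].
  set (k := Nat.max k0 N).
  assert (Hk : Rmax Af (Af * INR l0 / δg) < INR k)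
    by (apply (Rlt_le_trans _ _ _ Hk0), le_INR, Nat.le_max_l).
  pose proof (Rmax_l Af (Af * INR l0 / δg)). pose proof (Rmax_r Af (Af * INR l0 / δg)).
  assert (Hadmk : admissible f k) by (apply (admissible_of_lt f δf Af Pf); lra).
  pose proof (admissible_pos f δf Af Pf k Hadmk) as Hk1.
  destruct (nat_above (Rmax (Ag * INR k / δf) (INR l0))) as [L0 HL0].
  pose proof (Rmax_l (Ag * INR k / δf) (INR l0)). pose proof (Rmax_r (Ag * INR k / δf) (INR l0)).
  assert (Hl0L0 : (l0 <= L0)%nat) by (apply INR_le; lra).
  set (h := dscale f k).
  destruct (exists_crossing (fun j => prec h (dscale g j)) l0 (L0 - l0)) as [l [Hl [Hnl HSl]]].
  { apply (not_prec_dscale_of_slope f g δf Af δg Ag Pf Pg); auto. lra. }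
  { replace (l0 + (L0 - l0))%nat with L0 by lia.
    apply (prec_dscale_of_slope f g δf Af δg Ag Pf Pg); auto; [lia|lra]. }
  exists k, l. split; [lia|]. split; [auto|]. split.
  - apply (admissible_of_lt g δg Ag Pg). apply le_INR in Hl. lra.
  - exists h. split; [apply (Sset_dscale f δf Af Pf); auto|].
    split; [apply (hardy_dscale f δf Af Pf)|]. split; [|exact HSl].
    apply (hardy_preceq_of_not_prec H HH); auto.
    + apply (hardy_dscale f δf Af Pf).
    + apply (hardy_dscale g δg Ag Pg).
    + exists 0. intros t _. apply Rgt_not_eq, dscale_pos.
Qed.

End DScale.

Theorem propositionA4 (H : (R -> R) -> Prop) (HH : GoodHardyField H)
  (f g : R -> R) (Hf : H f) (Hg : H g)
  (snf : strongly_nonpoly f) (sng : strongly_nonpoly g)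
  (d1 d2 : R) (hd1 : 0 < d1) (hd2 : 0 < d2)
  (hf1 : ll (fun t => Rpower t d1) f) (hg2 : ll (fun t => Rpower t d2) g)
  (hgf : ll g f) :
  ((exists k : nat, admissible f k /\ admissible g k /\
       (forall h, Sset H f k h <-> Sset H g k h)) <-> sim f g)
  /\
  (forall k l : nat, admissible f k -> admissible g l ->
     ((exists h, Sset H f k h /\ Sset H g l h) -> (l <= k)%nat) /\
     (Sset H g l (dscale f k) -> ~ sim f g -> (l + 1 <= k)%nat))
  /\
  (forall N : nat, exists k l : nat, (N <= k + l)%nat /\
     admissible f k /\ admissible g l /\
     exists h, Sset H f k h /\ Sset H g l h).
Proof.
  destruct (deriv_profile_of_strongly_nonpoly H HH f d1 Hf snf hd1 hf1) as [δf [Af Pf]].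
  destruct (deriv_profile_of_strongly_nonpoly H HH g d2 Hg sng hd2 hg2) as [δg [Ag Pg]].
  split; [split|split].
  - intros [k [Ak [_ HS]]].
    pose proof (admissible_pos H f δf Af Pf k Ak) as Hk.
    apply (sim_of_preceq_dscale H HH f g δf Af δg Ag Pf Pg k Hk hgf).
    apply HS, (Sset_dscale H HH f δf Af Pf k Hk).
  - intros Hsim. destruct (nat_above (Rmax Af Ag)) as [k Hk].
    pose proof (Rmax_l Af Ag). pose proof (Rmax_r Af Ag).
    assert (Ak : admissible f k) by (apply (admissible_of_lt H f δf Af Pf); lra).
    exists k. split; [|split]; auto; [apply (admissible_of_lt H g δg Ag Pg); lra|].
    apply (Sset_iff_of_ll H HH f g δf Af δg Ag k Pf Pg); auto.
    + apply (admissible_pos H f δf Af Pf k Ak).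
    + apply ll_of_sim; auto. apply (dp_regular Pg 0).
  - intros k l Ak Bl. pose proof (admissible_pos H f δf Af Pf k Ak) as Hk.
    split; [intros [h [Hfh Hgh]]; apply (Sset_inter_le H HH f g δf Af δg Ag Pf Pg k l h); auto|].
    intros Hs Hns.
    pose proof (Sset_inter_le H HH f g δf Af δg Ag Pf Pg k l _ hgf
                  (Sset_dscale H HH f δf Af Pf k Hk) Hs).
    destruct (Nat.eq_dec l k) as [->|]; [exfalso|lia].
    apply Hns, (sim_of_preceq_dscale H HH f g δf Af δg Ag Pf Pg k Hk hgf), Hs.
  - intros N. apply (Sset_inter_unbounded H HH f g δf Af δg Ag N Pf Pg).
Qed.
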